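(* Let $G$ be a group, $N$ a normal subgroup, and $S=\bigoplus_{g\in G}S_g$ a nearly epsilon-strongly $G$-graded ring. Fix $C\in G/N$. For any positive integer $n$ and elements $s_{g_1},\dots,s_{g_n}$ with $s_{g_i}\in S_{g_i}$ and $g_i\in C$ for all $i$, there exists $e\in S_CS_{C^{-1}}$ with $es_{g_i}=s_{g_i}$ for all $1\le i\le n$, and there exists $e'\in S_{C^{-1}}S_C$ with $s_{g_i}e'=s_{g_i}$ for all $1\le i\le n$.
   Context: Rings are associative, not necessarily unital; $AB$ denotes finite sums of products. A $G$-grading: $S=\bigoplus_gS_g$, $S_gS_h\subseteq S_{gh}$. The grading is nearly epsilon-strong if $S_gS_{g^{-1}}S_g=S_g$ for all $g$ and each ring $S_gS_{g^{-1}}$ is $s$-unital ($x\in xR\cap Rx$ for all $x$ in the ring $R$); equivalently, for each $g$ and $s\in S_g$ there are $\epsilon\in S_gS_{g^{-1}}$ and $\epsilon'\in S_{g^{-1}}S_g$ with $\epsilon s=s=s\epsilon'$. Induced grading: $S_C=\bigoplus_{g\in C}S_g$. *)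

From HB Require Import structures.
From mathcomp Require Import all_boot all_order all_algebra.
From Stdlib Require List.
Set Implicit Arguments. Unset Strict Implicit. Unset Printing Implicit Defensive.
Import GRing.Theory.
Local Open Scope ring_scope.

Definition is_group (G : Type) (gm : G -> G -> G) (gi : G -> G) (ge : G) : Prop :=
  [/\ (forall x y z, gm x (gm y z) = gm (gm x y) z),
      (forall x, gm ge x = x /\ gm x ge = x) &
      (forall x, gm (gi x) x = ge /\ gm x (gi x) = ge)].

Definition is_normal_subgroup (G : Type) (gm : G -> G -> G) (gi : G -> G) (ge : G)
  (N : G -> Prop) : Prop :=
  [/\ N ge, (forall x y, N x -> N y -> N (gm x y)), (forall x, N x -> N (gi x)) &
      (forall g x, N x -> N (gm (gm g x) (gi g)))].

Definition is_coset (G : Type) (gm : G -> G -> G) (gi : G -> G) (N C : G -> Prop) : Prop :=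
  exists g, forall x, C x <-> N (gm (gi g) x).

Definition coset_inv (G : Type) (gi : G -> G) (C : G -> Prop) : G -> Prop :=
  fun x => C (gi x).

Definition is_rng (S : zmodType) (mul : S -> S -> S) : Prop :=
  [/\ (forall x y z, mul x (mul y z) = mul (mul x y) z),
      (forall x y z, mul (x + y) z = mul x z + mul y z) &
      (forall x y z, mul x (y + z) = mul x y + mul x z)].

Definition prodset (S : zmodType) (mul : S -> S -> S) (A B : S -> Prop) : S -> Prop :=
  fun x => exists l : seq (S * S),
    (forall p, List.In p l -> A p.1 /\ B p.2) /\ x = \sum_(p <- l) mul p.1 p.2.

Definition s_unital (S : zmodType) (mul : S -> S -> S) (R : S -> Prop) : Prop :=
  forall x, R x -> (exists r, R r /\ x = mul x r) /\ (exists r, R r /\ x = mul r x).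

Definition is_grading (G : Type) (gm : G -> G -> G) (ge : G)
  (S : zmodType) (mul : S -> S -> S) (Sg : G -> S -> Prop) : Prop :=
  [/\
      (forall g, Sg g 0 /\ (forall x y, Sg g x -> Sg g y -> Sg g (x - y))),
      (forall g h x y, Sg g x -> Sg h y -> Sg (gm g h) (mul x y)),
      (forall s, exists l : seq (G * S),
          (forall p, List.In p l -> Sg p.1 p.2) /\ s = \sum_(p <- l) p.2) &
      (* the sum is direct *)
      (forall l : seq (G * S),
          (forall p, List.In p l -> Sg p.1 p.2) ->
          (forall i j, (i < j < size l)%N -> (nth (ge, 0) l i).1 <> (nth (ge, 0) l j).1) ->
          \sum_(p <- l) p.2 = 0 ->
          forall p, List.In p l -> p.2 = 0)].

Definition nearly_epsilon_strong (G : Type) (gm : G -> G -> G) (gi : G -> G) (ge : G)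
  (S : zmodType) (mul : S -> S -> S) (Sg : G -> S -> Prop) : Prop :=
  is_grading gm ge mul Sg /\
  forall g,
    (forall x, prodset mul (prodset mul (Sg g) (Sg (gi g))) (Sg g) x <-> Sg g x) /\
    s_unital mul (prodset mul (Sg g) (Sg (gi g))).

(* induced grading: S_C = ⊕_{g in C} S_g *)
Definition induced (G : Type) (S : zmodType) (Sg : G -> S -> Prop) (C : G -> Prop)
  : S -> Prop :=
  fun x => exists l : seq (G * S),
    (forall p, List.In p l -> C p.1 /\ Sg p.1 p.2) /\ x = \sum_(p <- l) p.2.

From HB Require Import structures.
From mathcomp Require Import all_boot all_order all_algebra.
From Stdlib Require List.
Set Implicit Arguments. Unset Strict Implicit. Unset Printing Implicit Defensive.
Import GRing.Theory.
Local Open Scope ring_scope.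

(* A homogeneous s in S_g is a finite sum of products a_k b_k with a_k in the
   ring S_g S_{g^-1} (as S_g = S_g S_{g^-1} S_g), so a common left unit of the
   a_k in that s-unital ring fixes s.  Common left units of finitely many
   elements are assembled one element at a time (Tominaga's argument): if u
   fixes x_1 and v fixes each x_i - u x_i, then u + v - v u fixes every x_i.
   Applied to s_{g_1}, ..., s_{g_n} with units taken from the rings
   S_g S_{g^-1}, g in C, which lie in S_C S_{C^-1}, preserve degrees and
   satisfy S_C S_{C^-1} S_g S_{g^-1} <= S_C S_{C^-1}, this yields e; e' is
   the same construction in the opposite ring graded by the opposite group. *)

Lemma mem_In (T : eqType) (x : T) (s : seq T) : x \in s -> List.In x s.
Proof. by elim: s => //= y s IHs; rewrite in_cons => /predU1P [->|/IHs]; [left | right]. Qed.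

Section AdditiveMaps.
Variables (U V : zmodType) (f : U -> V).
Hypothesis fD : {morph f : x y / x + y}.

Lemma additive0 : f 0 = 0.
Proof. by apply: (@addrI _ (f 0)); rewrite -fD !addr0. Qed.

Lemma additiveN : {morph f : x / - x}.
Proof. by move=> x; apply: (@addrI _ (f x)); rewrite -fD !subrr additive0. Qed.

Lemma additiveB : {morph f : x y / x - y}.
Proof. by move=> x y; rewrite fD additiveN. Qed.

Lemma additive_sum (I : Type) (r : seq I) (F : I -> U) :
  f (\sum_(i <- r) F i) = \sum_(i <- r) f (F i).
Proof. exact: (big_morph f fD additive0). Qed.

End AdditiveMaps.

Section Rng.
Variables (S : zmodType) (mul : S -> S -> S).
Hypothesis Smul : is_rng mul.

Lemma rng_mulA x y z : mul x (mul y z) = mul (mul x y) z.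
Proof. by case: Smul. Qed.

Lemma rng_mulDl x : {morph mul^~ x : y z / y + z}.
Proof. by case: Smul => _ + _ y z; apply. Qed.

Lemma rng_mulDr x : {morph mul x : y z / y + z}.
Proof. by case: Smul => _ _ + y z; apply. Qed.

Lemma rng_mulr0 x : mul x 0 = 0. Proof. exact: additive0 (rng_mulDr x). Qed.
Lemma rng_mulrN x y : mul x (- y) = - mul x y. Proof. exact: (additiveN (rng_mulDr x) y). Qed.
Lemma rng_mulBl x y z : mul (x - y) z = mul x z - mul y z.
Proof. exact: (additiveB (rng_mulDl z) x y). Qed.
Lemma rng_mulBr x y z : mul x (y - z) = mul x y - mul x z.
Proof. exact: (additiveB (rng_mulDr x) y z). Qed.
Lemma rng_mulr_sum (I : Type) (r : seq I) (F : I -> S) x :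
  mul x (\sum_(i <- r) F i) = \sum_(i <- r) mul x (F i).
Proof. exact: (additive_sum (rng_mulDr x)). Qed.

End Rng.

Definition sum_closed (S : zmodType) (Q : S -> Prop) : Prop :=
  Q 0 /\ forall x y, Q x -> Q y -> Q (x + y).

Section FiniteSums.
Variables (S : zmodType) (I : Type) (P : I -> Prop) (F : I -> S).

(* Both [prodset mul A B] and [induced Sg C] unfold to instances of this. *)
Definition finite_sums (x : S) : Prop :=
  exists l : seq I, (forall p, List.In p l -> P p) /\ x = \sum_(p <- l) F p.

Lemma finite_sums_closed : sum_closed finite_sums.
Proof.
split; first by exists [::]; rewrite big_nil.
move=> x y [l1 [Pl1 ->]] [l2 [Pl2 ->]].
exists (l1 ++ l2); rewrite big_cat.
by split=> // p /(List.in_app_or l1 l2 p) [/Pl1 | /Pl2].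
Qed.

Lemma finite_sums_gen p : P p -> finite_sums (F p).
Proof. by exists [:: p]; rewrite big_seq1; split=> // q [<- | []]. Qed.

Lemma finite_sums_image (S' : zmodType) (f : S -> S') (Q : S' -> Prop) :
  {morph f : x y / x + y} -> sum_closed Q -> (forall p, P p -> Q (f (F p))) ->
  forall x, finite_sums x -> Q (f x).
Proof.
move=> fD [Q0 QD] QF _ [l [Pl ->]]; rewrite (additive_sum fD).
elim: l Pl => [|p l IHl] Pl; first by rewrite big_nil.
by rewrite big_cons; apply: QD; [apply/QF/Pl; left | apply: IHl => q lq; apply: Pl; right].
Qed.

End FiniteSums.

Section ProdSet.
Variables (S : zmodType) (mul : S -> S -> S).

Lemma prodset_closed (A B : S -> Prop) : sum_closed (prodset mul A B).
Proof. exact: finite_sums_closed. Qed.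

Lemma prodset_mul (A B : S -> Prop) a b : A a -> B b -> prodset mul A B (mul a b).
Proof. by move=> Aa Bb; apply: (@finite_sums_gen _ _ _ _ (a, b)). Qed.

Lemma prodset_image (S' : zmodType) (f : S -> S') (Q : S' -> Prop) (A B : S -> Prop) :
  {morph f : x y / x + y} -> sum_closed Q -> (forall a b, A a -> B b -> Q (f (mul a b))) ->
  forall x, prodset mul A B x -> Q (f x).
Proof. by move=> fD QC QAB; apply: finite_sums_image fD QC _ => -[a b] []; apply: QAB. Qed.

Lemma prodset_ind (Q A B : S -> Prop) :
  sum_closed Q -> (forall a b, A a -> B b -> Q (mul a b)) ->
  forall x, prodset mul A B x -> Q x.
Proof. exact: (prodset_image (f := id)). Qed.

Lemma prodset_mono (A B A' B' : S -> Prop) x :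
  (forall a, A a -> A' a) -> (forall b, B b -> B' b) ->
  prodset mul A B x -> prodset mul A' B' x.
Proof.
move=> AA' BB' Hx; apply: (prodset_ind (prodset_closed _ _) _ Hx) => a b Aa Bb.
by apply: prodset_mul; [apply: AA' | apply: BB'].
Qed.

End ProdSet.

Lemma prodset_rev (S : zmodType) (mul : S -> S -> S) (A B : S -> Prop) x :
  prodset (fun a b => mul b a) A B x <-> prodset mul B A x.
Proof.
suff rev (mul' : S -> S -> S) A' B' y :
    prodset (fun a b => mul' b a) A' B' y -> prodset mul' B' A' y.
  by split; [apply: rev | apply: (rev (fun a b => mul b a))].
by move=> Hy; apply: (prodset_ind (prodset_closed _ _ _) _ Hy) => a b Aa Bb; apply: prodset_mul.
Qed.

Section ProdSetRng.
Variables (S : zmodType) (mul : S -> S -> S).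
Hypothesis Smul : is_rng mul.

Lemma prodsetN (A B : S -> Prop) x :
  (forall b, B b -> B (- b)) -> prodset mul A B x -> prodset mul A B (- x).
Proof.
move=> BN Hx; apply: (prodset_image (@opprD S) (prodset_closed _ _ _) _ Hx) => a b Aa Bb.
by rewrite -(rng_mulrN Smul); apply: prodset_mul => //; apply: BN.
Qed.

Lemma prodset_mulr (A B : S -> Prop) u x :
  (forall b, B b -> B (mul b u)) -> prodset mul A B x -> prodset mul A B (mul x u).
Proof.
move=> Bu Hx.
apply: (prodset_image (rng_mulDl Smul u) (prodset_closed _ _ _) _ Hx) => a b Aa Bb /=.
by rewrite -(rng_mulA Smul); apply: prodset_mul => //; apply: Bu.
Qed.

Lemma prodsetA (A B D : S -> Prop) x :
  prodset mul (prodset mul A B) D x -> prodset mul A (prodset mul B D) x.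
Proof.
move=> Hx; apply: (prodset_ind (prodset_closed _ _ _) _ Hx) => ab d ABab Dd.
apply: (prodset_image (rng_mulDl Smul d) (prodset_closed _ _ _) _ ABab) => a b Aa Bb /=.
by rewrite -(rng_mulA Smul); apply: prodset_mul => //; apply: prodset_mul.
Qed.

End ProdSetRng.

Section Induced.
Variables (G : Type) (S : zmodType) (Sg : G -> S -> Prop) (C : G -> Prop).

Lemma induced_closed : sum_closed (induced Sg C).
Proof. exact: finite_sums_closed. Qed.

Lemma induced_gen g y : C g -> Sg g y -> induced Sg C y.
Proof. by move=> Cg Sy; apply: (@finite_sums_gen _ _ _ _ (g, y)). Qed.

Lemma induced_image (S' : zmodType) (f : S -> S') (Q : S' -> Prop) :
  {morph f : x y / x + y} -> sum_closed Q -> (forall g y, C g -> Sg g y -> Q (f y)) ->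
  forall x, induced Sg C x -> Q (f x).
Proof. by move=> fD QC QS; apply: finite_sums_image fD QC _ => -[g y] []; apply: QS. Qed.

End Induced.

Section CommonLeftUnit.
Variables (S : zmodType) (mul : S -> S -> S) (B R X : S -> Prop).
Hypothesis Smul : is_rng mul.
Hypothesis R0 : R 0.
Hypothesis R_circle : forall u v, B u -> R v -> R (u + v - mul v u).
Hypothesis X_left_unit : forall x, X x -> exists2 u, B u & mul u x = x.
Hypothesis X_sub_mul : forall u y, B u -> X y -> X (y - mul u y).

(* Formally 1 - (u + v - v u) = (1 - v) (1 - u): the composite fixes what u
   fixes, and what v fixes once u has been subtracted off. *)
Lemma common_left_unit (I : eqType) (l : seq I) (f : I -> S) :
  (forall i, i \in l -> X (f i)) ->
  exists2 u, R u & forall i, i \in l -> mul u (f i) = f i.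
Proof.
elim: l f => [|a l IHl] f Xl; first by exists 0.
have [u Bu ua] := X_left_unit (Xl a (mem_head a l)).
have [|v Rv vl] := IHl (fun i => f i - mul u (f i)).
  by move=> i li; apply/X_sub_mul/Xl => //; rewrite in_cons li orbT.
exists (u + v - mul v u); first exact: R_circle.
have circleE z : mul (u + v - mul v u) z = mul u z + mul v (z - mul u z).
  by rewrite (rng_mulBl Smul) (rng_mulDl Smul) (rng_mulBr Smul) (rng_mulA Smul) addrA.
move=> i; rewrite in_cons => /predU1P [-> | li]; rewrite circleE.
  by rewrite ua subrr (rng_mulr0 Smul) addr0.
by rewrite vl // addrC subrK.
Qed.

End CommonLeftUnit.

Section Group.
Variables (G : Type) (gm : G -> G -> G) (gi : G -> G) (ge : G).
Hypothesis Ggroup : is_group gm gi ge.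

Lemma grp_mulA x y z : gm x (gm y z) = gm (gm x y) z.
Proof. by case: Ggroup. Qed.

Lemma grp_mul1g x : gm ge x = x. Proof. by case: Ggroup => _ /(_ x) []. Qed.
Lemma grp_mulg1 x : gm x ge = x. Proof. by case: Ggroup => _ /(_ x) []. Qed.
Lemma grp_mulVg x : gm (gi x) x = ge. Proof. by case: Ggroup => _ _ /(_ x) []. Qed.
Lemma grp_mulgV x : gm x (gi x) = ge. Proof. by case: Ggroup => _ _ /(_ x) []. Qed.

Lemma grp_invgK x : gi (gi x) = x.
Proof. by rewrite -[gi (gi x)]grp_mulg1 -(grp_mulVg x) grp_mulA grp_mulVg grp_mul1g. Qed.

End Group.

Lemma is_group_rev (G : Type) (gm : G -> G -> G) (gi : G -> G) (ge : G) :
  is_group gm gi ge -> is_group (fun x y => gm y x) gi ge.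
Proof.
move=> Ggroup; split=> [x y z | x | x]; first by rewrite (grp_mulA Ggroup).
  by rewrite (grp_mul1g Ggroup) (grp_mulg1 Ggroup).
by rewrite (grp_mulVg Ggroup) (grp_mulgV Ggroup).
Qed.

Lemma is_rng_rev (S : zmodType) (mul : S -> S -> S) :
  is_rng mul -> is_rng (fun x y => mul y x).
Proof.
by move=> Smul; split=> x y z; rewrite ?(rng_mulA Smul) ?(rng_mulDl Smul) ?(rng_mulDr Smul).
Qed.

Section HomogeneousLeftUnits.
Variables (G : Type) (gm : G -> G -> G) (gi : G -> G) (ge : G).
Variables (S : zmodType) (mul : S -> S -> S) (Sg : G -> S -> Prop).
Hypothesis Ggroup : is_group gm gi ge.
Hypothesis Smul : is_rng mul.
Hypothesis Sg_subgroup : forall g, Sg g 0 /\ (forall x y, Sg g x -> Sg g y -> Sg g (x - y)).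
Hypothesis Sg_mul : forall g h x y, Sg g x -> Sg h y -> Sg (gm g h) (mul x y).

Local Notation R g := (prodset mul (Sg g) (Sg (gi g))).

Lemma Sg0 g : Sg g 0. Proof. by case: (Sg_subgroup g). Qed.

Lemma SgB g x y : Sg g x -> Sg g y -> Sg g (x - y).
Proof. by case: (Sg_subgroup g) => _; apply. Qed.

Lemma SgN g x : Sg g x -> Sg g (- x).
Proof. by rewrite -sub0r; apply/SgB/Sg0. Qed.

Lemma Sg_closed g : sum_closed (Sg g).
Proof.
split=> [|x y Sx Sy]; first exact: Sg0.
by rewrite -[y]opprK; apply/SgB/SgN.
Qed.

Lemma inducedN (D : G -> Prop) x : induced Sg D x -> induced Sg D (- x).
Proof.
move=> Dx; apply: (induced_image (@opprD S) (induced_closed _ _) _ Dx) => h y Dh Sy.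
exact/(induced_gen Dh)/SgN.
Qed.

Lemma Sg_Rmul g h u y : R g u -> Sg h y -> Sg h (mul u y).
Proof.
move=> Ru Sy; apply: (prodset_image (rng_mulDl Smul y) (Sg_closed h) _ Ru) => a b Sa Sb /=.
rewrite -[h in Sg h](grp_mul1g Ggroup) -(grp_mulgV Ggroup g).
exact/Sg_mul/Sy/Sg_mul.
Qed.

Lemma Sg_mulR g h u y : R g u -> Sg h y -> Sg h (mul y u).
Proof.
move=> Ru Sy; apply: (prodset_image (rng_mulDr Smul y) (Sg_closed h) _ Ru) => a b Sa Sb /=.
rewrite (rng_mulA Smul) -[h in Sg h](grp_mulg1 Ggroup) -(grp_mulgV Ggroup g) (grp_mulA Ggroup).
exact/Sg_mul/Sb/Sg_mul.
Qed.

Lemma R_closed g : sum_closed (R g).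
Proof. exact: prodset_closed. Qed.

Lemma RB g x y : R g x -> R g y -> R g (x - y).
Proof.
by move=> Rx Ry; apply: (R_closed g).2 => //; apply: (prodsetN Smul) Ry => b; apply: SgN.
Qed.

Lemma RM g x y : R g x -> R g y -> R g (mul x y).
Proof. by move=> Rx Ry; apply: (prodset_mulr Smul) Rx => b Sb; apply: Sg_mulR Ry Sb. Qed.

Hypothesis Sg_sub_RS : forall g x, Sg g x -> prodset mul (R g) (Sg g) x.
Hypothesis R_left_s_unital : forall g x, R g x -> exists2 r, R g r & mul r x = x.

Lemma homog_left_unit g x : Sg g x -> exists2 u, R g u & mul u x = x.
Proof.
move=> /Sg_sub_RS [l [lRS ->]].
have R_circle u v : R g u -> R g v -> R g (u + v - mul v u).
  by move=> Ru Rv; apply/RB/RM => //; apply: (R_closed g).2.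
have R_sub_mul u y : R g u -> R g y -> R g (y - mul u y).
  by move=> Ru Ry; apply/RB/RM.
have lR p : p \in l -> R g p.1 by move=> /mem_In /lRS [].
have [u Ru ul] := common_left_unit Smul (R_closed g).1 R_circle (@R_left_s_unital g) R_sub_mul lR.
exists u => //; rewrite (rng_mulr_sum Smul); apply: eq_big_seq => p lp.
by rewrite (rng_mulA Smul) ul.
Qed.

Variable C : G -> Prop.
Local Notation T := (prodset mul (induced Sg C) (induced Sg (coset_inv gi C))).

Lemma R_sub_T g u : C g -> R g u -> T u.
Proof.
move=> Cg; apply: prodset_mono => [a | b]; first exact: induced_gen.
by apply: (induced_gen (g := gi g)); rewrite /coset_inv (grp_invgK Ggroup).
Qed.

Lemma T_mul_R g u v : R g u -> T v -> T (mul v u).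
Proof.
move=> Ru; apply: (prodset_mulr Smul) => b Cb.
apply: (induced_image (rng_mulDl Smul u) (induced_closed _ _) _ Cb) => h y Ch Sy.
exact/(induced_gen Ch)/(Sg_mulR Ru).
Qed.

Lemma induced_left_unit (I : finType) (s : I -> S) :
  (forall i, exists2 g, C g & Sg g (s i)) ->
  exists2 e, T e & forall i, mul e (s i) = s i.
Proof.
move=> Cs.
pose B u := exists2 g, C g & R g u.
pose X y := exists2 h, C h & Sg h y.
have T_circle u v : B u -> T v -> T (u + v - mul v u).
  move=> [g Cg Ru] Tv; have [_ TD] : sum_closed T := prodset_closed _ _ _.
  exact: TD (TD _ _ (R_sub_T Cg Ru) Tv) (prodsetN Smul (@inducedN _) (T_mul_R Ru Tv)).
have X_left_unit x : X x -> exists2 u, B u & mul u x = x.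
  by move=> [h Ch /homog_left_unit [u Ru ux]]; exists u => //; exists h.
have X_sub_mul u y : B u -> X y -> X (y - mul u y).
  by move=> [g _ Ru] [h Ch Sy]; exists h => //; apply/SgB/(Sg_Rmul Ru).
have [e Te es] := common_left_unit Smul (prodset_closed _ _ _).1 T_circle X_left_unit X_sub_mul
  (l := enum I) (f := s) (fun i _ => Cs i).
by exists e => // i; apply/es; rewrite mem_enum.
Qed.

End HomogeneousLeftUnits.

Section NearlyEpsilonStrong.
Variables (G : Type) (gm : G -> G -> G) (gi : G -> G) (ge : G).
Variables (S : zmodType) (mul : S -> S -> S) (Sg : G -> S -> Prop).
Hypothesis Ggroup : is_group gm gi ge.
Hypothesis Smul : is_rng mul.
Hypothesis Snes : nearly_epsilon_strong gm gi ge mul Sg.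

Local Notation rmul := (fun x y => mul y x).

Lemma nes_Sg_sub_RS g x : Sg g x -> prodset mul (prodset mul (Sg g) (Sg (gi g))) (Sg g) x.
Proof. exact: ((Snes.2 g).1 x).2. Qed.

Lemma nes_left_s_unital g x :
  prodset mul (Sg g) (Sg (gi g)) x -> exists2 r, prodset mul (Sg g) (Sg (gi g)) r & mul r x = x.
Proof. by move=> /((Snes.2 g).2 x) [_ [r [Rr xE]]]; exists r; last rewrite -xE. Qed.

Lemma nes_Sg_sub_SR g x : Sg g x -> prodset rmul (prodset rmul (Sg g) (Sg (gi g))) (Sg g) x.
Proof.
move=> /nes_Sg_sub_RS /(prodsetA Smul) Sx; apply/prodset_rev.
by apply: prodset_mono Sx => // b Rb; apply/prodset_rev.
Qed.

Lemma nes_right_s_unital g x :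
  prodset rmul (Sg g) (Sg (gi g)) x -> exists2 r, prodset rmul (Sg g) (Sg (gi g)) r & mul x r = x.
Proof.
move=> /prodset_rev Rx.
have /((Snes.2 (gi g)).2 x) [[r [Rr xE]] _] : prodset mul (Sg (gi g)) (Sg (gi (gi g))) x.
  by rewrite (grp_invgK Ggroup).
rewrite (grp_invgK Ggroup) in Rr.
by exists r; [apply/prodset_rev | rewrite -xE].
Qed.

Lemma nes_induced_left_unit (C : G -> Prop) (I : finType) (s : I -> S) :
  (forall i, exists2 g, C g & Sg g (s i)) ->
  exists2 e, prodset mul (induced Sg C) (induced Sg (coset_inv gi C)) e &
    forall i, mul e (s i) = s i.
Proof.
have [[Sg_subgroup Sg_mul _ _] _] := Snes.
move=> Cs; exact: (induced_left_unit Ggroup Smul Sg_subgroup Sg_mul nes_Sg_sub_RS nes_left_s_unital Cs).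
Qed.

Lemma nes_induced_right_unit (C : G -> Prop) (I : finType) (s : I -> S) :
  (forall i, exists2 g, C g & Sg g (s i)) ->
  exists2 e, prodset mul (induced Sg (coset_inv gi C)) (induced Sg C) e &
    forall i, mul (s i) e = s i.
Proof.
have [[Sg_subgroup Sg_mul _ _] _] := Snes.
have Sg_rmul g h x y : Sg g x -> Sg h y -> Sg (gm h g) (rmul x y) by move=> Sx Sy; apply: Sg_mul.
move=> Cs; have [e Te es] := induced_left_unit (is_group_rev Ggroup) (is_rng_rev Smul)
  Sg_subgroup Sg_rmul nes_Sg_sub_SR nes_right_s_unital Cs.
by exists e => //; apply/prodset_rev.
Qed.

End NearlyEpsilonStrong.

Theorem lemma5p7 (G : Type) (gm : G -> G -> G) (gi : G -> G) (ge : G)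
  (N : G -> Prop) (S : zmodType) (mul : S -> S -> S) (Sg : G -> S -> Prop)
  (C : G -> Prop) :
  is_group gm gi ge ->
  is_normal_subgroup gm gi ge N ->
  is_rng mul ->
  nearly_epsilon_strong gm gi ge mul Sg ->
  is_coset gm gi N C ->
  forall (n : nat) (g : 'I_n -> G) (s : 'I_n -> S),
    (0 < n)%N ->
    (forall i, C (g i) /\ Sg (g i) (s i)) ->
    (exists e, prodset mul (induced Sg C) (induced Sg (coset_inv gi C)) e /\
               forall i, mul e (s i) = s i) /\
    (exists e', prodset mul (induced Sg (coset_inv gi C)) (induced Sg C) e' /\
               forall i, mul (s i) e' = s i).
Proof.
move=> Ggroup _ Smul Snes _ n g s _ gs.
have Cs i : exists2 h, C h & Sg h (s i) by exists (g i); case: (gs i).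
split.
  by have [e Te es] := nes_induced_left_unit Ggroup Smul Snes Cs; exists e.
by have [e Te es] := nes_induced_right_unit Ggroup Smul Snes Cs; exists e.
Qed.
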